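(* For every integer $n \ge 1$, $$\sum_{k=2}^{\infty} \log\Big( \sum_{j=1}^{n} j^{-k} \Big) < 1.$$
   Context: $\log$ denotes the natural logarithm. *)

From Stdlib Require Import Reals.
Open Scope R_scope.

(* power_sum n k = sum_{j=1}^{n} j^{-k}  (for n >= 1) *)
Definition power_sum (n k : nat) : R :=
  sum_f_R0 (fun i => / (INR (i + 1) ^ k)) (n - 1).

(* term m of the series sum_{k>=2} log(...), indexed by k = m + 2 *)
Definition series_term (n m : nat) : R := ln (power_sum n (m + 2)).

(** For [n >= 1] every term [ln (power_sum n k)] is nonnegative and, by
    [ln x <= x - 1], at most [power_sum n k - 1 = sum_{j=2}^{n} j^(-k)].
    Summing over [k >= 2] and exchanging the order of summation, the
    contribution of each [j] is the geometric tail
    [sum_{k>=2} j^(-k) = 1/(j-1) - 1/j], so the partial sums of the series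
    telescope to at most [1 - 1/n < 1]. *)

From Stdlib Require Import Reals Lra Lia.
Open Scope R_scope.

Lemma ln_le_sub1 (x : R) : 0 < x -> ln x <= x - 1.
Proof.
  intros Hx.
  pose proof (exp_ineq1_le (ln x)) as H.
  rewrite exp_ln in H by exact Hx.
  lra.
Qed.

Lemma ln_ge0 (x : R) : 1 <= x -> 0 <= ln x.
Proof.
  intros Hx.
  destruct (Req_dec x 1) as [->|Hne].
  - rewrite ln_1; lra.
  - rewrite <- ln_1. left. apply ln_increasing; lra.
Qed.

Lemma geometric_tail_le (x : R) (M : nat) : 0 <= x < 1 ->
  sum_f_R0 (fun m => x ^ (m + 2)) M <= x ^ 2 / (1 - x).
Proof.
  intros Hx.
  assert (Hfactor : sum_f_R0 (fun m => x ^ (m + 2)) M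
                    = x ^ 2 * sum_f_R0 (fun m => x ^ m) M).
  { rewrite scal_sum. apply sum_eq. intros i _. rewrite pow_add. ring. }
  rewrite Hfactor, tech3 by lra.
  assert (0 <= x ^ S M) by (apply pow_le; lra).
  assert (0 <= x ^ 2) by (apply pow_le; lra).
  unfold Rdiv. rewrite <- Rmult_assoc.
  apply Rmult_le_compat_r; [left; apply Rinv_0_lt_compat; lra | nra].
Qed.

Lemma geometric_tail_inv_succ (q : R) : 0 < q ->
  (/ (q + 1)) ^ 2 / (1 - / (q + 1)) = / q - / (q + 1).
Proof. intros Hq. field. lra. Qed.

Lemma power_sum_1 (k : nat) : power_sum 1 k = 1.
Proof. unfold power_sum. simpl. rewrite pow1. apply Rinv_1. Qed.

(* [power_sum 0 = power_sum 1] because the upper index [n - 1] is truncated. *)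
Lemma power_sum_succ (n k : nat) : (1 <= n)%nat ->
  power_sum (S n) k = power_sum n k + (/ INR (S n)) ^ k.
Proof.
  intros Hn. destruct n as [|p]; [lia|].
  unfold power_sum.
  replace (S (S p) - 1)%nat with (S p) by lia.
  replace (S p - 1)%nat with p by lia.
  rewrite tech5, pow_inv, Nat.add_1_r. reflexivity.
Qed.

Lemma power_sum_ge1 (n k : nat) : 1 <= power_sum n k.
Proof.
  unfold power_sum. induction (n - 1)%nat as [|p IH].
  - simpl. rewrite pow1, Rinv_1. lra.
  - rewrite tech5.
    assert (0 < / INR (S p + 1) ^ k).
    { apply Rinv_0_lt_compat, pow_lt, lt_0_INR. lia. }
    lra.
Qed.

Lemma sum_power_sum_sub1_le (n M : nat) : (1 <= n)%nat ->
  sum_f_R0 (fun m => power_sum n (m + 2) - 1) M <= 1 - / INR n.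
Proof.
  induction n as [|n IH]; intros Hn; [lia|].
  destruct (Nat.eq_dec n 0) as [->|Hn0].
  - assert (Hzero : sum_f_R0 (fun m => power_sum 1 (m + 2) - 1) M = 0).
    { clear IH. induction M as [|M IHM].
      - simpl. rewrite power_sum_1. ring.
      - rewrite tech5, IHM, power_sum_1. ring. }
    rewrite Hzero. simpl. lra.
  - set (x := / INR (S n)).
    assert (Hsplit : sum_f_R0 (fun m => power_sum (S n) (m + 2) - 1) M
                     = sum_f_R0 (fun m => power_sum n (m + 2) - 1) M
                       + sum_f_R0 (fun m => x ^ (m + 2)) M).
    { rewrite <- sum_plus. apply sum_eq. intros i _.
      rewrite power_sum_succ by lia. unfold x. ring. }
    assert (Hq : 0 < INR n) by (apply lt_0_INR; lia).
    assert (HSn : INR (S n) = INR n + 1) by apply S_INR.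
    assert (Hx : 0 <= x < 1).
    { unfold x. rewrite HSn. split.
      - left. apply Rinv_0_lt_compat. lra.
      - rewrite <- Rinv_1. apply Rinv_lt_contravar; lra. }
    pose proof (geometric_tail_le x M Hx) as Htail.
    unfold x in Htail. rewrite HSn, geometric_tail_inv_succ in Htail by exact Hq.
    rewrite Hsplit. unfold x. rewrite HSn. specialize (IH ltac:(lia)). lra.
Qed.

Lemma nonneg_series_bounded (u : nat -> R) (B : R) :
  (forall m, 0 <= u m) -> (forall M, sum_f_R0 u M <= B) ->
  exists l : R, infinite_sum u l /\ l <= B.
Proof.
  intros Hpos Hbound.
  assert (Hgrowing : Un_growing (sum_f_R0 u)).
  { intros M. rewrite tech5. specialize (Hpos (S M)). lra. }
  assert (Hub : has_ub (sum_f_R0 u)).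
  { exists B. intros y [M ->]. apply Hbound. }
  destruct (growing_cv _ Hgrowing Hub) as [l Hl].
  exists l. split; [exact Hl|].
  assert (Hconst : Un_cv (fun _ => B) B).
  { intros eps Heps. exists 0%nat. intros N _.
    unfold Rdist. rewrite Rminus_diag, Rabs_R0. exact Heps. }
  exact (Rle_cv_lim Hbound Hl Hconst).
Qed.

Theorem mainTheorem3 (n : nat) (hn : (1 <= n)%nat) :
  exists l : R, infinite_sum (series_term n) l /\ l < 1.
Proof.
  assert (Hpos : forall m, 0 <= series_term n m).
  { intros m. apply ln_ge0, power_sum_ge1. }
  assert (Hbound : forall M, sum_f_R0 (series_term n) M <= 1 - / INR n).
  { intros M. eapply Rle_trans; [|exact (sum_power_sum_sub1_le n M hn)].
    apply sum_Rle. intros m _. apply ln_le_sub1.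
    pose proof (power_sum_ge1 n (m + 2)). lra. }
  destruct (nonneg_series_bounded _ _ Hpos Hbound) as [l [Hl Hle]].
  exists l. split; [exact Hl|].
  assert (0 < / INR n) by (apply Rinv_0_lt_compat, lt_0_INR; lia).
  lra.
Qed.
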